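(* Let $K_-,K_+>0$ and define, for the two-layered wavenumber $K(X)=K_-$ for $X<0$, $K(X)=K_+$ for $X>0$, the objects $\Lambda^\pm$, $\beta^\pm$, $R^\pm$, $T^\pm$, $\Psi^\pm$ as in the context. Then: (i) for all $(\lambda,X)\in\Lambda^\pm\times\mathbb{R}$, $|\Psi^\pm(\lambda,X)|\le 2$; (ii) with $\mathbb{D}:=\mathbb{C}\setminus(-\infty,-\min(K_-^2,K_+^2)]$, each of the functions $\lambda\mapsto\beta^\pm(\lambda)$, $\lambda\mapsto R^\pm(\lambda)$, $\lambda\mapsto T^\pm(\lambda)$, and $\lambda\mapsto\Psi^\pm(\lambda,X)$ for every fixed $X\in\mathbb{R}$ (each considered on the real interval $(-\min(K_-^2,K_+^2),+\infty)$) has an analytic continuation to $\mathbb{D}$; moreover the analytic continuations of $(\lambda,X)\mapsto\Psi^\pm(\lambda,X)$ are bounded on every compact subset of $\mathbb{D}\times\mathbb{R}$.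
   Context: $\Lambda^\pm:=(-K_\pm^2,+\infty)$. For $\lambda\in\mathbb{R}$, $\beta^\pm(\lambda):=\sqrt{\lambda+K_\pm^2}$ if $\lambda\ge-K_\pm^2$ and $\beta^\pm(\lambda):=i\sqrt{-\lambda-K_\pm^2}$ if $\lambda<-K_\pm^2$. $R^\pm(\lambda):=\frac{\beta^\pm(\lambda)-\beta^\mp(\lambda)}{\beta^+(\lambda)+\beta^-(\lambda)}$, $T^\pm(\lambda):=\frac{2\beta^\pm(\lambda)}{\beta^+(\lambda)+\beta^-(\lambda)}$. For $(\lambda,X)\in\Lambda^\pm\times\mathbb{R}$: $\Psi^\pm(\lambda,X):=e^{\mp i\beta^\pm(\lambda)X}+R^\pm(\lambda)e^{\pm i\beta^\pm(\lambda)X}$ if $\pm X>0$, and $\Psi^\pm(\lambda,X):=T^\pm(\lambda)e^{\mp i\beta^\mp(\lambda)X}$ if $\mp X>0$. *)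

From Stdlib Require Import Reals List.
From Coquelicot Require Import Coquelicot.
Open Scope R_scope.

(* Sign index: true = "+", false = "-". *)
Definition Kpm (Km Kp : R) (s : bool) : R := if s then Kp else Km.

Definition cexp (z : C) : C :=
  (exp (Re z) * cos (Im z), exp (Re z) * sin (Im z)).

Definition beta (Km Kp : R) (s : bool) (lam : R) : C :=
  let K := Kpm Km Kp s in
  if Rle_dec (- K ^ 2) lam then RtoC (sqrt (lam + K ^ 2))
  else (0, sqrt (- lam - K ^ 2)).

Definition Rcoef (Km Kp : R) (s : bool) (lam : R) : C :=
  ((beta Km Kp s lam - beta Km Kp (negb s) lam)
   / (beta Km Kp true lam + beta Km Kp false lam))%C.

Definition Tcoef (Km Kp : R) (s : bool) (lam : R) : C :=
  (2 * beta Km Kp s lam / (beta Km Kp true lam + beta Km Kp false lam))%C.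

Definition sgn (s : bool) : R := if s then 1 else -1.

(* Psi^pm(lambda, X).  For s = "+" the first branch is X > 0, for s = "-"
   it is X < 0; at X = 0 both branches agree (1 + R = T), we use the first. *)
Definition Psi (Km Kp : R) (s : bool) (lam X : R) : C :=
  if Rle_dec 0 (sgn s * X) then
    (cexp (- (sgn s) * Ci * beta Km Kp s lam * X)
     + Rcoef Km Kp s lam * cexp ((sgn s) * Ci * beta Km Kp s lam * X))%C
  else
    (Tcoef Km Kp s lam * cexp (- (sgn s) * Ci * beta Km Kp (negb s) lam * X))%C.

Definition Lambda (Km Kp : R) (s : bool) (lam : R) : Prop :=
  - (Kpm Km Kp s) ^ 2 < lam.

Definition Dslit (Km Kp : R) (z : C) : Prop :=
  ~ (Im z = 0 /\ Re z <= - Rmin (Km ^ 2) (Kp ^ 2)).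

Definition analytic_on (U : C -> Prop) (f : C -> C) : Prop :=
  forall z, U z -> ex_derive (K := C_AbsRing) (V := C_NormedModule) f z.

Definition analytic_continuation (Km Kp : R) (g : R -> C) (F : C -> C) : Prop :=
  analytic_on (Dslit Km Kp) F /\
  forall lam : R, - Rmin (Km ^ 2) (Kp ^ 2) < lam -> F (RtoC lam) = g lam.

Definition compact_CR (S : C * R -> Prop) : Prop :=
  forall (I : Type) (U : I -> C * R -> Prop),
    (forall i, @open (prod_UniformSpace C_UniformSpace R_UniformSpace) (U i)) ->
    (forall p, S p -> exists i, U i p) ->
    exists l : list I, forall p, S p -> exists i, In i l /\ U i p.

(* For real lam in Lambda^pm, beta^pm is a positive real and beta^mp lies in the
   closed first quadrant, so |R^pm| <= 1 and |T^pm| <= 2, the incident and reflected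
   exponentials have modulus 1 and the transmitted one decays: hence |Psi^pm| <= 2.
   For (ii), beta^pm is continued by the principal square root of lam + K_pm^2, which is
   holomorphic with positive real part off the cut (-oo, -min(K_-^2, K_+^2)]; there
   beta^+ + beta^- has positive real part, so substituting it into the same formulas
   continues R^pm, T^pm and Psi^pm.  On a compact subset of D x R the continuation of Psi^pm
   is bounded because it is locally bounded: near each point |beta^pm| and |X| are
   bounded and, by continuity, Re (beta^+ + beta^-) stays away from 0. *)

From Stdlib Require Import Reals Lra List RList FunctionalExtensionality.
From Coquelicot Require Import Coquelicot.
Open Scope R_scope.

Definition ex_Cderive (f : C -> C) (z : C) : Prop :=
  @ex_derive C_AbsRing C_NormedModule f z.

(* Coquelicot equips [C] with two normed-module structures that agree only
   after unfolding; the product and chain rules are stated for the ring one. *)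
Lemma ex_Cderive_ring (f : C -> C) (z : C) :
  ex_Cderive f z <-> @ex_derive C_AbsRing (AbsRing_NormedModule C_AbsRing) f z.
Proof.
  split; intros [l [_ Hl]]; exists l;
    (split; [apply is_linear_scal_l | exact Hl]).
Qed.

Lemma ex_Cderive_const (c : C) (z : C) : ex_Cderive (fun _ => c) z.
Proof. apply ex_derive_const. Qed.

Lemma ex_Cderive_id (z : C) : ex_Cderive (fun w => w) z.
Proof. apply ex_Cderive_ring, ex_derive_id. Qed.

Lemma ex_Cderive_plus (f g : C -> C) (z : C) :
  ex_Cderive f z -> ex_Cderive g z -> ex_Cderive (fun w => f w + g w)%C z.
Proof. intros Hf Hg. exact (ex_derive_plus f g z Hf Hg). Qed.

Lemma ex_Cderive_minus (f g : C -> C) (z : C) :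
  ex_Cderive f z -> ex_Cderive g z -> ex_Cderive (fun w => f w - g w)%C z.
Proof. intros Hf Hg. exact (ex_derive_minus f g z Hf Hg). Qed.

Lemma ex_Cderive_mult (f g : C -> C) (z : C) :
  ex_Cderive f z -> ex_Cderive g z -> ex_Cderive (fun w => f w * g w)%C z.
Proof.
  rewrite !ex_Cderive_ring. intros [a Ha] [b Hb].
  eexists. exact (is_derive_mult f g z a b Ha Hb Cmult_comm).
Qed.

Lemma ex_Cderive_comp (f g : C -> C) (z : C) :
  ex_Cderive g z -> ex_Cderive f (g z) -> ex_Cderive (fun w => f (g w)) z.
Proof. intros Hg Hf. apply ex_Cderive_ring in Hg. exact (ex_derive_comp f g z Hf Hg). Qed.

Lemma ex_Cderive_of_remainder (f : C -> C) (z l : C) :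
  (forall eps : posreal, exists del : posreal, forall w, Cmod (w - z) < del ->
     Cmod (f w - f z - l * (w - z)) <= eps * Cmod (w - z)) ->
  ex_Cderive f z.
Proof.
  intros H. exists l. split; [apply is_linear_scal_l|].
  intros x Hx eps.
  assert (z = x) as <-
    by exact (@is_filter_lim_locally_unique C_AbsRing (AbsRing_NormedModule C_AbsRing) z x Hx).
  destruct (H eps) as [del Hdel]. exists del. intros w Hw.
  change (Cmod (f w - f z - (w - z) * l) <= eps * Cmod (w - z)).
  rewrite (Cmult_comm (w - z)). exact (Hdel w Hw).
Qed.

Lemma ex_Cderive_of_quadratic_remainder (f : C -> C) (z l : C) (rho M : R) :
  0 < rho ->
  (forall w, Cmod (w - z) < rho ->
     Cmod (f w - f z - l * (w - z)) <= M * Cmod (w - z) ^ 2) ->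
  ex_Cderive f z.
Proof.
  intros Hrho H. apply ex_Cderive_of_remainder with l. intros eps.
  assert (Hdel : 0 < Rmin rho (eps / (Rabs M + 1))).
  { apply Rmin_pos; [lra |]. apply Rdiv_lt_0_compat; [apply cond_pos|].
    pose proof (Rabs_pos M); lra. }
  exists (mkposreal _ Hdel). intros w Hw; simpl in Hw.
  pose proof (Rmin_l rho (eps / (Rabs M + 1))).
  pose proof (Rmin_r rho (eps / (Rabs M + 1))).
  pose proof (Cmod_ge_0 (w - z)). pose proof (Rabs_pos M). pose proof (Rle_abs M).
  assert ((Rabs M + 1) * Cmod (w - z) <= eps).
  { apply Rmult_le_reg_r with (/ (Rabs M + 1)); [apply Rinv_0_lt_compat; lra|].
    replace ((Rabs M + 1) * Cmod (w - z) * / (Rabs M + 1)) with (Cmod (w - z)) by (field; lra).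
    lra. }
  eapply Rle_trans; [apply H; lra|]. nra.
Qed.

Lemma ex_Cderive_Cinv (z : C) : z <> 0%C -> ex_Cderive Cinv z.
Proof.
  intros Hz. pose proof (proj1 (Cmod_gt_0 z) Hz) as Hm.
  apply (ex_Cderive_of_quadratic_remainder _ z (- / (z * z)) (Cmod z / 2) (2 / Cmod z ^ 3));
    [lra |].
  intros w Hw.
  assert (Hw2 : Cmod z / 2 <= Cmod w).
  { pose proof (Cmod_triangle w (z - w)). replace (w + (z - w))%C with z in H by ring.
    rewrite <- Cmod_opp in Hw. replace (- (w - z))%C with (z - w)%C in Hw by ring. lra. }
  assert (Hw0 : w <> 0%C) by (intros ->; rewrite Cmod_0 in Hw2; lra).
  replace (/ w - / z - - / (z * z) * (w - z))%C with ((w - z) * (w - z) / (w * (z * z)))%C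
    by (field; auto).
  rewrite Cmod_div, !Cmod_mult by (repeat apply Cmult_neq_0; auto).
  pose proof (pow2_ge_0 (Cmod (w - z))).
  replace (Cmod (w - z) * Cmod (w - z)) with (Cmod (w - z) ^ 2) by ring.
  unfold Rdiv. rewrite (Rmult_comm (2 * _)).
  apply Rmult_le_compat_l; [lra |].
  replace (2 * / Cmod z ^ 3) with (/ (Cmod z / 2 * (Cmod z * Cmod z))) by (field; lra).
  apply Rinv_le_contravar; [repeat apply Rmult_lt_0_compat; lra |].
  apply Rmult_le_compat_r; [apply Rmult_le_pos|]; lra.
Qed.

Lemma ex_Cderive_Re_gt_near (f : C -> C) (z0 : C) (c : R) :
  ex_Cderive f z0 -> c < Re (f z0) ->
  exists del : posreal, forall z, Cmod (z - z0) < del -> c < Re (f z).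
Proof.
  intros Hf Hc. assert (Heps : 0 < Re (f z0) - c) by lra.
  destruct (proj1 (filterlim_locally f (f z0)) (ex_derive_continuous f z0 Hf) (mkposreal _ Heps))
    as [del Hdel].
  exists del. intros z Hz. destruct (Hdel z Hz) as [Hre _]. simpl in Hre.
  change (Rabs (Re (f z) - Re (f z0)) < Re (f z0) - c) in Hre.
  apply Rabs_def2 in Hre. lra.
Qed.

Lemma cexp_plus (a b : C) : cexp (a + b)%C = (cexp a * cexp b)%C.
Proof.
  destruct a as [a1 a2], b as [b1 b2]. unfold cexp, Cmult, Cplus; simpl.
  rewrite exp_plus, cos_plus, sin_plus. f_equal; ring.
Qed.

Lemma Cmod_cexp (w : C) : Cmod (cexp w) = exp (Re w).
Proof.
  destruct w as [a b]. unfold cexp, Cmod; simpl.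
  transitivity (sqrt (Rsqr (exp a))); [f_equal | apply sqrt_Rsqr; left; apply exp_pos].
  pose proof (sin2_cos2 b) as Hsc. unfold Rsqr in *.
  transitivity (exp a * exp a * (sin b * sin b + cos b * cos b)); [ring | rewrite Hsc; ring].
Qed.

Lemma Cmod_le_Re_Im (c : C) : Cmod c <= Rabs (Re c) + Rabs (Im c).
Proof.
  destruct c as [x y]. unfold Cmod; simpl.
  pose proof (Rabs_pos x); pose proof (Rabs_pos y).
  rewrite <- (sqrt_Rsqr (Rabs x + Rabs y)) by lra.
  apply sqrt_le_1_alt. unfold Rsqr.
  pose proof (Rsqr_abs x); pose proof (Rsqr_abs y). unfold Rsqr in *. nra.
Qed.

Lemma Cmod_Re_bounds (w : C) : - Cmod w <= Re w <= Cmod w.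
Proof. apply Rabs_le_between, re_le_Cmod. Qed.

Lemma Re_le_Cmod (w : C) : Re w <= Cmod w.
Proof. apply Cmod_Re_bounds. Qed.

Lemma derivable_pt_lim_remainder (f : R -> R) (x l : R) :
  derivable_pt_lim f x l -> forall eps, 0 < eps -> exists del, 0 < del /\
    forall h, Rabs h < del -> Rabs (f (x + h) - f x - l * h) <= eps * Rabs h.
Proof.
  intros H eps Heps. destruct (H eps Heps) as [del Hdel].
  exists del. split; [apply cond_pos |]. intros h Hh.
  destruct (Req_dec h 0) as [-> | Hn].
  - rewrite Rplus_0_r, Rabs_R0. replace (f x - f x - l * 0) with 0 by ring.
    rewrite Rabs_R0. lra.
  - replace (f (x + h) - f x - l * h) with (((f (x + h) - f x) / h - l) * h)
      by (field; auto).
    rewrite Rabs_mult. apply Rmult_le_compat_r; [apply Rabs_pos |].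
    left. apply Hdel; auto.
Qed.

Lemma exp_cos_sin_remainder_0 (e : R) : 0 < e -> exists del, 0 < del /\
  forall h, Rabs h < del -> Rabs (exp h - 1 - h) <= e * Rabs h /\
    Rabs (cos h - 1) <= e * Rabs h /\ Rabs (sin h - h) <= e * Rabs h.
Proof.
  intros He.
  destruct (derivable_pt_lim_remainder _ _ _ (derivable_pt_lim_exp 0) e He) as [d1 [Hd1 Hexp]].
  destruct (derivable_pt_lim_remainder _ _ _ (derivable_pt_lim_cos 0) e He) as [d2 [Hd2 Hcos]].
  destruct (derivable_pt_lim_remainder _ _ _ (derivable_pt_lim_sin 0) e He) as [d3 [Hd3 Hsin]].
  exists (Rmin d1 (Rmin d2 d3)). split; [repeat apply Rmin_pos; auto |].
  intros h Hh.
  pose proof (Rmin_l d1 (Rmin d2 d3)). pose proof (Rmin_r d1 (Rmin d2 d3)).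
  pose proof (Rmin_l d2 d3). pose proof (Rmin_r d2 d3).
  specialize (Hexp h ltac:(lra)). specialize (Hcos h ltac:(lra)). specialize (Hsin h ltac:(lra)).
  rewrite Rplus_0_l, exp_0, Rmult_1_l in Hexp.
  rewrite Rplus_0_l, cos_0, sin_0, Ropp_0, Rmult_0_l, Rminus_0_r in Hcos.
  rewrite Rplus_0_l, sin_0, cos_0, Rmult_1_l, Rminus_0_r in Hsin.
  auto.
Qed.

Lemma cexp_remainder_0 (eps : posreal) :
  exists del : posreal, forall w, Cmod w < del -> Cmod (cexp w - 1 - w) <= eps * Cmod w.
Proof.
  pose proof (cond_pos eps).
  set (e := Rmin (eps / 6) 1).
  assert (He : 0 < e) by (apply Rmin_pos; lra).
  assert (He1 : e <= 1) by apply Rmin_r.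
  assert (He6 : e <= eps / 6) by apply Rmin_l.
  destruct (exp_cos_sin_remainder_0 e He) as [d [Hd Hrem]].
  assert (Hdel : 0 < Rmin d (e / 4)) by (apply Rmin_pos; lra).
  exists (mkposreal _ Hdel). intros [a b] Hw; simpl in Hw.
  pose proof (Rmin_l d (e / 4)). pose proof (Rmin_r d (e / 4)).
  pose proof (Rmax_Cmod (a, b)). pose proof (Rmax_l (Rabs a) (Rabs b)).
  pose proof (Rmax_r (Rabs a) (Rabs b)). simpl in *. set (m := Cmod (a, b)) in *.
  assert (Ha : Rabs a <= m) by lra. assert (Hb : Rabs b <= m) by lra.
  destruct (Hrem a ltac:(lra)) as [A1 _]. destruct (Hrem b ltac:(lra)) as [_ [A2 A3]].
  assert (Eb : 0 < exp a <= 3).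
  { split; [apply exp_pos |]. eapply Rle_trans; [| apply exp_le_3].
    apply Rlt_le, exp_increasing. pose proof (Rle_abs a). lra. }
  assert (HRe : Rabs (exp a * cos b - 1 - a) <= 4 * e * m).
  { replace (exp a * cos b - 1 - a) with ((exp a - 1 - a) + exp a * (cos b - 1)) by ring.
    eapply Rle_trans; [apply Rabs_triang |]. rewrite Rabs_mult, (Rabs_right (exp a)) by lra.
    pose proof (Rabs_pos (cos b - 1)). pose proof (Rabs_pos a). pose proof (Rabs_pos b). nra. }
  assert (HIm : Rabs (exp a * sin b - b) <= 2 * e * m).
  { replace (exp a * sin b - b) with ((exp a - 1) * sin b + (sin b - b)) by ring.
    eapply Rle_trans; [apply Rabs_triang |]. rewrite Rabs_mult.
    assert (Q1 : Rabs (exp a - 1) <= e / 2).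
    { replace (exp a - 1) with ((exp a - 1 - a) + a) by ring.
      eapply Rle_trans; [apply Rabs_triang |]. pose proof (Rabs_pos a). nra. }
    assert (Q2 : Rabs (sin b) <= 2 * m).
    { replace (sin b) with ((sin b - b) + b) by ring.
      eapply Rle_trans; [apply Rabs_triang |]. pose proof (Rabs_pos b). nra. }
    pose proof (Rabs_pos (exp a - 1)). pose proof (Rabs_pos (sin b)).
    pose proof (Rabs_pos b). nra. }
  replace (cexp (a, b) - 1 - (a, b))%C with ((exp a * cos b - 1 - a, exp a * sin b - b) : C)
    by (unfold cexp; apply injective_projections; simpl; ring).
  assert (6 * e * m <= eps * m) by (apply Rmult_le_compat_r; [apply Cmod_ge_0 | lra]).
  eapply Rle_trans; [apply Cmod_le_Re_Im |]. simpl. lra.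
Qed.

Lemma ex_Cderive_cexp (z : C) : ex_Cderive cexp z.
Proof.
  apply ex_Cderive_of_remainder with (cexp z). intros eps.
  set (M := Cmod (cexp z) + 1).
  assert (HM : 0 < M) by (pose proof (Cmod_ge_0 (cexp z)); unfold M; lra).
  assert (HeM : 0 < eps / M) by (apply Rdiv_lt_0_compat; [apply cond_pos | auto]).
  destruct (cexp_remainder_0 (mkposreal _ HeM)) as [del Hdel].
  exists del. intros w Hw. specialize (Hdel (w - z)%C Hw); simpl in Hdel.
  assert (Ew : cexp w = (cexp z * cexp (w - z))%C) by (rewrite <- cexp_plus; f_equal; ring).
  replace (cexp w - cexp z - cexp z * (w - z))%C with (cexp z * (cexp (w - z) - 1 - (w - z)))%C
    by (rewrite Ew; ring).
  rewrite Cmod_mult.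
  pose proof (Cmod_ge_0 (cexp z)). pose proof (Cmod_ge_0 (w - z)). pose proof (cond_pos eps).
  eapply Rle_trans; [apply Rmult_le_compat_l; [auto | exact Hdel] |].
  replace (Cmod (cexp z) * (eps / M * Cmod (w - z))) with ((Cmod (cexp z) / M) * eps * Cmod (w - z))
    by (field; lra).
  apply Rmult_le_compat_r; auto. rewrite <- (Rmult_1_l eps) at 2. apply Rmult_le_compat_r; [lra |].
  apply Rmult_le_reg_r with M; auto. unfold Rdiv. rewrite Rmult_assoc, Rinv_l; unfold M; lra.
Qed.

(* Principal branch, cut along (-oo, 0]: [Re (csqrt w) >= 0] and [Im (csqrt w)]
   has the sign of [Im w]. *)
Definition csqrt (w : C) : C :=
  (sqrt ((Cmod w + Re w) / 2),
   (if Rlt_dec (Im w) 0 then -1 else 1) * sqrt ((Cmod w - Re w) / 2)).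

Lemma csqrt_sq (w : C) : (csqrt w * csqrt w)%C = w.
Proof.
  destruct (Cmod_Re_bounds w) as [H1 H2]. pose proof (Cmod2_alt w) as Hm.
  destruct w as [a b]. unfold csqrt, Cmult; simpl in *.
  set (m := Cmod (a, b)) in *.
  set (u := sqrt ((m + a) / 2)). set (v := sqrt ((m - a) / 2)).
  assert (Hu : u * u = (m + a) / 2) by (apply sqrt_sqrt; lra).
  assert (Hv : v * v = (m - a) / 2) by (apply sqrt_sqrt; lra).
  assert (Huv : u * v = Rabs b / 2).
  { unfold u, v. rewrite <- sqrt_mult by lra.
    rewrite <- (sqrt_Rsqr (Rabs b / 2)) by (pose proof (Rabs_pos b); lra).
    f_equal. pose proof (Rsqr_abs b). unfold Rsqr in *. nra. }
  f_equal; destruct Rlt_dec as [Hb | Hb].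
  all: [> | | rewrite Rabs_left in Huv by lra | rewrite Rabs_right in Huv by lra]; nra.
Qed.

Lemma Re_csqrt_ge_0 (w : C) : 0 <= Re (csqrt w).
Proof. apply sqrt_pos. Qed.

Lemma Re_csqrt_pos (w : C) : ~ (Im w = 0 /\ Re w <= 0) -> 0 < Re (csqrt w).
Proof.
  intros Hw. apply sqrt_lt_R0.
  pose proof (Cmod2_alt w). pose proof (Cmod_ge_0 w).
  destruct (Rle_lt_dec (Re w) 0) as [Ha | Ha]; [| lra].
  assert (Im w <> 0) by tauto.
  assert (0 < Im w ^ 2) by (apply pow2_gt_0; auto). nra.
Qed.

Lemma csqrt_RtoC (x : R) : 0 <= x -> csqrt (RtoC x) = RtoC (sqrt x).
Proof.
  intros Hx. unfold csqrt. rewrite Cmod_R, Rabs_right by lra. simpl.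
  replace ((x + x) / 2) with x by field. replace ((x - x) / 2) with 0 by field.
  rewrite sqrt_0, Rmult_0_r. reflexivity.
Qed.

Lemma Cmod_csqrt_sq (w : C) : Cmod (csqrt w) ^ 2 = Cmod w.
Proof. rewrite <- (csqrt_sq w) at 2. rewrite Cmod_mult. ring. Qed.

Lemma csqrt_sub_mul_add (w w0 : C) :
  ((csqrt w - csqrt w0) * (csqrt w + csqrt w0))%C = (w - w0)%C.
Proof.
  transitivity (csqrt w * csqrt w - csqrt w0 * csqrt w0)%C; [ring | now rewrite !csqrt_sq].
Qed.

(* With [g = csqrt w], [g0 = csqrt w0]: [(g - g0) (g + g0) = w - w0] and
   [|g + g0| >= Re g0] give [|g - g0| <= |w - w0| / Re g0], and the remainder of the
   linearization with slope [1 / (2 g0)] is [- (g - g0)^2 / (2 g0)]. *)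
Lemma ex_Cderive_csqrt (w0 : C) : 0 < Re (csqrt w0) -> ex_Cderive csqrt w0.
Proof.
  intros Hr. set (g0 := csqrt w0) in *. set (r0 := Re g0) in *.
  assert (Hg0 : r0 <= Cmod g0) by apply Re_le_Cmod.
  assert (Hg0n : g0 <> 0%C) by (intros E; rewrite E, Cmod_0 in Hg0; lra).
  apply (ex_Cderive_of_quadratic_remainder _ w0 (/ (2 * g0)) 1 (/ (2 * r0 ^ 3))); [lra |].
  intros w _. fold g0. set (d := (csqrt w - g0)%C).
  assert (Hd : Cmod d * r0 <= Cmod (w - w0)).
  { rewrite <- (csqrt_sub_mul_add w w0), Cmod_mult. fold g0 d.
    apply Rmult_le_compat_l; [apply Cmod_ge_0 |].
    eapply Rle_trans; [| apply Re_le_Cmod].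
    change (Re (csqrt w + g0)) with (Re (csqrt w) + r0).
    pose proof (Re_csqrt_ge_0 w). lra. }
  replace (d - / (2 * g0) * (w - w0))%C with (- (d * d) / (2 * g0))%C
    by (rewrite <- (csqrt_sub_mul_add w w0); fold g0; unfold d; field; auto).
  assert (H2 : RtoC 2 <> 0%C) by (intros E; injection E; lra).
  rewrite Cmod_div, Cmod_opp, !Cmod_mult, Cmod_R, Rabs_right by (try apply Cmult_neq_0; auto; lra).
  pose proof (Cmod_ge_0 d).
  apply Rle_trans with (Cmod d * Cmod d / (2 * r0)).
  { unfold Rdiv. apply Rmult_le_compat_l; [nra |]. apply Rinv_le_contravar; lra. }
  assert ((Cmod d * r0) ^ 2 <= Cmod (w - w0) ^ 2) by (apply pow_incr; nra).
  replace (Cmod d * Cmod d / (2 * r0)) with (/ (2 * r0 ^ 3) * (Cmod d * r0) ^ 2) by (field; lra).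
  apply Rmult_le_compat_l; [left; apply Rinv_0_lt_compat, Rmult_lt_0_compat, pow_lt |]; lra.
Qed.

Definition refl_coef (b : bool -> C) (s : bool) : C :=
  ((b s - b (negb s)) / (b true + b false))%C.

Definition trans_coef (b : bool -> C) (s : bool) : C :=
  (2 * b s / (b true + b false))%C.

Definition wave (b : bool -> C) (s : bool) (X : R) : C :=
  if Rle_dec 0 (sgn s * X) then
    (cexp (- (sgn s) * Ci * b s * X) + refl_coef b s * cexp ((sgn s) * Ci * b s * X))%C
  else
    (trans_coef b s * cexp (- (sgn s) * Ci * b (negb s) * X))%C.

Lemma Psi_wave (Km Kp : R) (s : bool) (lam X : R) :
  Psi Km Kp s lam X = wave (fun t => beta Km Kp t lam) s X.
Proof. reflexivity. Qed.

Lemma Cmod_cexp_mul_Ci (k c : C) (X : R) :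
  Im k = 0 -> Cmod (cexp (k * Ci * c * X)) = exp (- Re k * X * Im c).
Proof.
  intros Hk. rewrite Cmod_cexp. f_equal. destruct k as [k1 k2], c as [c1 c2].
  simpl in *. subst. ring.
Qed.

Lemma exp_le_mono (x y : R) : x <= y -> exp x <= exp y.
Proof. intros [H | ->]; [left; apply exp_increasing |]; lra. Qed.

Lemma Cmod_cexp_le (w : C) : Cmod (cexp w) <= exp (Cmod w).
Proof. rewrite Cmod_cexp. apply exp_le_mono, Re_le_Cmod. Qed.

Lemma Cmod_div_le (a d : C) (A del : R) :
  0 < del -> Cmod a <= A -> del <= Cmod d -> Cmod (a / d) <= A / del.
Proof.
  intros Hdel Ha Hd. assert (d <> 0%C) by (intros E; rewrite E, Cmod_0 in Hd; lra).
  rewrite Cmod_div by auto. pose proof (Cmod_ge_0 a).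
  apply Rmult_le_compat; auto.
  - left; apply Rinv_0_lt_compat; lra.
  - apply Rinv_le_contravar; auto.
Qed.

Lemma Cmod_sub_le_add (r : R) (c : C) : 0 <= r -> 0 <= Re c ->
  Cmod (r - c) <= Cmod (r + c).
Proof.
  intros Hr Hc. unfold Cmod. apply sqrt_le_1_alt.
  destruct c as [c1 c2]. simpl in *. nra.
Qed.

Lemma Cmod_wave_le_2 (b : bool -> C) (s : bool) (r : R) (X : R) :
  0 < r -> b s = RtoC r -> 0 <= Re (b (negb s)) -> 0 <= Im (b (negb s)) ->
  Cmod (wave b s X) <= 2.
Proof.
  intros Hr Hbs Hre Him. set (c := b (negb s)) in *.
  assert (Hsum : (b true + b false)%C = (r + c)%C)
    by (unfold c; rewrite <- Hbs; destruct s; [| apply Cplus_comm]; reflexivity).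
  assert (Hden : r <= Cmod (r + c)).
  { eapply Rle_trans; [| apply Re_le_Cmod]. change (r <= r + Re c). lra. }
  assert (Hrefl : Cmod (refl_coef b s) <= 1).
  { unfold refl_coef. fold c. rewrite Hsum, Hbs.
    apply Rle_trans with (Cmod (r + c) / Cmod (r + c)); [| right; field; lra].
    apply Cmod_div_le; [lra | apply Cmod_sub_le_add; lra | lra]. }
  assert (Htrans : Cmod (trans_coef b s) <= 2).
  { unfold trans_coef. rewrite Hsum, Hbs.
    apply Rle_trans with (2 * r / r); [| right; field; lra].
    apply Cmod_div_le; [lra | | lra].
    rewrite <- RtoC_mult, Cmod_R, Rabs_right; lra. }
  assert (Hsgn : Im (sgn s) = 0 /\ Im (- sgn s)%C = 0) by (simpl; split; ring).
  unfold wave. fold c. rewrite Hbs. destruct Rle_dec as [Hx | Hx].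
  - eapply Rle_trans; [apply Cmod_triangle |].
    rewrite Cmod_mult, !Cmod_cexp_mul_Ci by apply Hsgn. simpl Im.
    rewrite !Rmult_0_r, exp_0. pose proof (Cmod_ge_0 (refl_coef b s)). lra.
  - rewrite Cmod_mult, Cmod_cexp_mul_Ci by apply Hsgn. simpl Re.
    assert (exp (- - sgn s * X * Im c) <= 1).
    { rewrite <- exp_0. apply exp_le_mono. nra. }
    pose proof (Cmod_ge_0 (trans_coef b s)). pose proof (exp_pos (- - sgn s * X * Im c)). nra.
Qed.

Lemma Cmod_sgn (s : bool) : Cmod (sgn s) = 1 /\ Cmod (- sgn s)%C = 1.
Proof. rewrite Cmod_opp, Cmod_R. destruct s; simpl; rewrite ?Rabs_R1, ?Rabs_m1; auto. Qed.

Lemma Cmod_cexp_mul_Ci_le (k c : C) (X B n : R) :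
  Cmod k = 1 -> Cmod c <= B -> Rabs X <= n -> Cmod (cexp (k * Ci * c * X)) <= exp (B * n).
Proof.
  intros Hk Hc HX. eapply Rle_trans; [apply Cmod_cexp_le |]. apply exp_le_mono.
  rewrite !Cmod_mult, Hk, Cmod_Ci, Cmod_R, !Rmult_1_l.
  apply Rmult_le_compat; auto using Cmod_ge_0, Rabs_pos.
Qed.

Lemma Cmod_wave_le (b : bool -> C) (s : bool) (X B d n : R) :
  (forall t, Cmod (b t) <= B) -> 0 < d -> d <= Re (b true + b false) -> Rabs X <= n ->
  Cmod (wave b s X) <= (1 + 2 * B / d) * exp (B * n).
Proof.
  intros HB Hd Hsum HX.
  assert (HB0 : 0 <= B) by (eapply Rle_trans; [apply Cmod_ge_0 | apply (HB true)]).
  assert (Hden : d <= Cmod (b true + b false))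
    by (eapply Rle_trans; [exact Hsum | apply Re_le_Cmod]).
  assert (Hrefl : Cmod (refl_coef b s) <= 2 * B / d).
  { apply Cmod_div_le; auto. unfold Cminus. eapply Rle_trans; [apply Cmod_triangle |].
    rewrite Cmod_opp. pose proof (HB s). pose proof (HB (negb s)). lra. }
  assert (Htrans : Cmod (trans_coef b s) <= 2 * B / d).
  { apply Cmod_div_le; auto. rewrite Cmod_mult, Cmod_R, Rabs_right by lra.
    pose proof (HB s). lra. }
  assert (H2Bd : 0 <= 2 * B / d)
    by (apply Rmult_le_pos; [lra | left; apply Rinv_0_lt_compat; lra]).
  destruct (Cmod_sgn s) as [Hp Hm]. pose proof (exp_pos (B * n)).
  unfold wave. destruct Rle_dec.
  - eapply Rle_trans; [apply Cmod_triangle |]. rewrite Cmod_mult.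
    pose proof (Cmod_cexp_mul_Ci_le _ _ X _ _ Hm (HB s) HX).
    pose proof (Cmod_cexp_mul_Ci_le _ _ X _ _ Hp (HB s) HX).
    pose proof (Cmod_ge_0 (refl_coef b s)). nra.
  - rewrite Cmod_mult.
    pose proof (Cmod_cexp_mul_Ci_le _ _ X _ _ Hm (HB (negb s)) HX).
    pose proof (Cmod_ge_0 (trans_coef b s)).
    pose proof (Cmod_ge_0 (cexp (- sgn s * Ci * b (negb s) * X))). nra.
Qed.

Lemma ex_Cderive_cexp_mul_Ci (k : C) (c : C -> C) (X : R) (z : C) :
  ex_Cderive c z -> ex_Cderive (fun w => cexp (k * Ci * c w * X)) z.
Proof.
  intros Hc. apply (ex_Cderive_comp cexp (fun w => k * Ci * c w * X)%C); [| apply ex_Cderive_cexp].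
  apply ex_Cderive_mult; [apply ex_Cderive_mult; [apply ex_Cderive_const | exact Hc] |].
  apply ex_Cderive_const.
Qed.

Section WaveFamily.

Variables (b : bool -> C -> C) (z : C).
Hypothesis b_derivable : forall t, ex_Cderive (b t) z.
Hypothesis b_sum_neq0 : (b true z + b false z)%C <> 0%C.

Lemma ex_Cderive_inv_sum : ex_Cderive (fun w => / (b true w + b false w))%C z.
Proof.
  apply (ex_Cderive_comp Cinv (fun w => b true w + b false w)%C).
  - apply ex_Cderive_plus; apply b_derivable.
  - apply ex_Cderive_Cinv, b_sum_neq0.
Qed.

Lemma ex_Cderive_refl_coef (s : bool) : ex_Cderive (fun w => refl_coef (fun t => b t w) s) z.
Proof.
  apply ex_Cderive_mult; [apply ex_Cderive_minus; apply b_derivable | apply ex_Cderive_inv_sum].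
Qed.

Lemma ex_Cderive_trans_coef (s : bool) : ex_Cderive (fun w => trans_coef (fun t => b t w) s) z.
Proof.
  apply ex_Cderive_mult; [| apply ex_Cderive_inv_sum].
  apply ex_Cderive_mult; [apply ex_Cderive_const | apply b_derivable].
Qed.

Lemma ex_Cderive_wave (s : bool) (X : R) : ex_Cderive (fun w => wave (fun t => b t w) s X) z.
Proof.
  unfold wave. destruct Rle_dec.
  - apply ex_Cderive_plus; [| apply ex_Cderive_mult; [apply ex_Cderive_refl_coef |]];
      apply ex_Cderive_cexp_mul_Ci, b_derivable.
  - apply ex_Cderive_mult; [apply ex_Cderive_trans_coef |].
    apply ex_Cderive_cexp_mul_Ci, b_derivable.
Qed.

End WaveFamily.

(* Cover [S] by the open sets [{q | g <= M near q}], indexed by [M]. *)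
Lemma bounded_on_compact_CR (S : C * R -> Prop) (g : C * R -> R) :
  compact_CR S -> (forall p, S p -> exists M, locally p (fun q => g q <= M)) ->
  exists M, forall p, S p -> g p <= M.
Proof.
  intros HS Hloc.
  destruct (HS R (fun M q => locally q (fun q' => g q' <= M))) as [l Hl].
  - intros M q Hq. exact (locally_locally q _ Hq).
  - exact Hloc.
  - exists (MaxRlist l). intros p Hp. destruct (Hl p Hp) as [M [HM Hq]].
    eapply Rle_trans; [exact (locally_singleton _ _ Hq) | apply MaxRlist_P1, HM].
Qed.

Section Continuation.

Variables Km Kp : R.

Definition betaC (s : bool) (z : C) : C := csqrt (z + RtoC (Kpm Km Kp s ^ 2)).

Lemma Kpm_sq_ge_min (s : bool) : Rmin (Km ^ 2) (Kp ^ 2) <= Kpm Km Kp s ^ 2.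
Proof. destruct s; simpl; [apply Rmin_r | apply Rmin_l]. Qed.

Lemma Re_betaC_pos (s : bool) (z : C) : Dslit Km Kp z -> 0 < Re (betaC s z).
Proof.
  intros Hz. apply Re_csqrt_pos.
  change (~ (Im z + 0 = 0 /\ Re z + Kpm Km Kp s ^ 2 <= 0)).
  pose proof (Kpm_sq_ge_min s). intros [Him Hre]. apply Hz. split; lra.
Qed.

Lemma Re_betaC_sum_pos (z : C) : Dslit Km Kp z -> 0 < Re (betaC true z + betaC false z).
Proof.
  intros Hz. pose proof (Re_betaC_pos true z Hz). pose proof (Re_betaC_pos false z Hz).
  change (0 < Re (betaC true z) + Re (betaC false z)). lra.
Qed.

Lemma betaC_sum_neq0 (z : C) : Dslit Km Kp z -> (betaC true z + betaC false z)%C <> 0%C.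
Proof.
  intros Hz E. pose proof (Re_betaC_sum_pos z Hz) as Hpos. rewrite E in Hpos. simpl in Hpos. lra.
Qed.

Lemma ex_Cderive_betaC (s : bool) (z : C) : Dslit Km Kp z -> ex_Cderive (betaC s) z.
Proof.
  intros Hz. apply (ex_Cderive_comp csqrt (fun w => w + RtoC (Kpm Km Kp s ^ 2))%C).
  - apply ex_Cderive_plus; [apply ex_Cderive_id | apply ex_Cderive_const].
  - apply ex_Cderive_csqrt, Re_betaC_pos, Hz.
Qed.

Lemma betaC_RtoC (s : bool) (lam : R) :
  - Rmin (Km ^ 2) (Kp ^ 2) < lam -> betaC s (RtoC lam) = beta Km Kp s lam.
Proof.
  intros Hlam. pose proof (Kpm_sq_ge_min s).
  unfold betaC, beta. destruct Rle_dec; [| lra].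
  rewrite <- RtoC_plus, csqrt_RtoC by lra. reflexivity.
Qed.

Lemma betaC_family_RtoC (lam : R) : - Rmin (Km ^ 2) (Kp ^ 2) < lam ->
  (fun t => betaC t (RtoC lam)) = (fun t => beta Km Kp t lam).
Proof. intros Hlam. apply functional_extensionality. intros t. apply betaC_RtoC, Hlam. Qed.

Lemma Cmod_betaC_le (s : bool) (z : C) : Cmod (betaC s z) <= 1 + Cmod z + Km ^ 2 + Kp ^ 2.
Proof.
  assert (Cmod (betaC s z) ^ 2 <= Cmod z + Km ^ 2 + Kp ^ 2).
  { unfold betaC. rewrite Cmod_csqrt_sq. eapply Rle_trans; [apply Cmod_triangle |].
    rewrite Cmod_R, Rabs_right by (apply Rle_ge, pow2_ge_0).
    pose proof (pow2_ge_0 Km). pose proof (pow2_ge_0 Kp). destruct s; simpl Kpm; lra. }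
  pose proof (Cmod_ge_0 (betaC s z)). pose proof (pow2_ge_0 Km). pose proof (pow2_ge_0 Kp). nra.
Qed.

Lemma analytic_continuation_beta (s : bool) :
  analytic_continuation Km Kp (beta Km Kp s) (betaC s).
Proof. split; [exact (ex_Cderive_betaC s) | exact (betaC_RtoC s)]. Qed.

Lemma analytic_continuation_Rcoef (s : bool) :
  analytic_continuation Km Kp (Rcoef Km Kp s) (fun z => refl_coef (fun t => betaC t z) s).
Proof.
  split.
  - intros z Hz.
    apply ex_Cderive_refl_coef; [intros t; apply ex_Cderive_betaC | apply betaC_sum_neq0]; auto.
  - intros lam Hlam. rewrite betaC_family_RtoC by auto. reflexivity.
Qed.

Lemma analytic_continuation_Tcoef (s : bool) :
  analytic_continuation Km Kp (Tcoef Km Kp s) (fun z => trans_coef (fun t => betaC t z) s).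
Proof.
  split.
  - intros z Hz.
    apply ex_Cderive_trans_coef; [intros t; apply ex_Cderive_betaC | apply betaC_sum_neq0]; auto.
  - intros lam Hlam. rewrite betaC_family_RtoC by auto. reflexivity.
Qed.

Lemma analytic_continuation_Psi (s : bool) (X : R) :
  analytic_continuation Km Kp (fun lam => Psi Km Kp s lam X)
    (fun z => wave (fun t => betaC t z) s X).
Proof.
  split.
  - intros z Hz.
    apply ex_Cderive_wave; [intros t; apply ex_Cderive_betaC | apply betaC_sum_neq0]; auto.
  - intros lam Hlam. rewrite betaC_family_RtoC by auto. reflexivity.
Qed.

Lemma wave_betaC_locally_bounded (s : bool) (p : C * R) : Dslit Km Kp (fst p) ->
  exists M, locally p (fun q => Cmod (wave (fun t => betaC t (fst q)) s (snd q)) <= M).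
Proof.
  destruct p as [z0 X0]; simpl; intros Hz0.
  set (sum := fun z => (betaC true z + betaC false z)%C).
  set (d := Re (sum z0)).
  assert (Hd : 0 < d) by apply Re_betaC_sum_pos, Hz0.
  destruct (ex_Cderive_Re_gt_near sum z0 (d / 2)) as [del Hdel]; [| fold d; lra |].
  { apply ex_Cderive_plus; apply ex_Cderive_betaC, Hz0. }
  pose proof (cond_pos del) as Hdel0.
  set (B := 1 + (Cmod z0 + del) + Km ^ 2 + Kp ^ 2).
  exists ((1 + 2 * B / (d / 2)) * exp (B * (Rabs X0 + del))).
  assert (Hdel2 : 0 < del / 2) by lra.
  exists (mkposreal _ Hdel2). intros [z X] [Hz HX]. simpl fst; simpl snd.
  assert (Hzz0 : Cmod (z - z0) < del).
  { pose proof (C_NormedModule_mixin_compat2 z0 z (mkposreal _ Hdel2) Hz) as Hball.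
    simpl in Hball. change (minus z z0) with (z - z0)%C in Hball.
    pose proof (sqrt_less_alt 2 ltac:(lra)). nra. }
  assert (Hzn : Cmod z <= Cmod z0 + del).
  { replace z with (z0 + (z - z0))%C by ring. eapply Rle_trans; [apply Cmod_triangle | lra]. }
  apply Cmod_wave_le; [| lra | left; apply Hdel, Hzz0 |].
  - intros t. eapply Rle_trans; [apply Cmod_betaC_le | unfold B; lra].
  - change (Rabs (X - X0) < del / 2) in HX. pose proof (Rabs_triang_inv X X0). lra.
Qed.

Lemma beta_first_quadrant (s : bool) (lam : R) :
  0 <= Re (beta Km Kp s lam) /\ 0 <= Im (beta Km Kp s lam).
Proof. unfold beta. destruct Rle_dec; simpl; split; (lra || apply sqrt_pos). Qed.

Lemma Cmod_Psi_le_2 (s : bool) (lam X : R) :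
  Lambda Km Kp s lam -> Cmod (Psi Km Kp s lam X) <= 2.
Proof.
  unfold Lambda. intros Hlam. rewrite Psi_wave.
  apply Cmod_wave_le_2 with (sqrt (lam + Kpm Km Kp s ^ 2)); try apply beta_first_quadrant.
  - apply sqrt_lt_R0. lra.
  - unfold beta. destruct Rle_dec; [reflexivity | lra].
Qed.

End Continuation.

Theorem proposition2p1 (Km Kp : R) (hKm : 0 < Km) (hKp : 0 < Kp) :
  (* (i) *)
  (forall (s : bool) (lam X : R), Lambda Km Kp s lam ->
     Cmod (Psi Km Kp s lam X) <= 2) /\
  (* (ii) *)
  (forall s : bool,
     (exists F, analytic_continuation Km Kp (beta Km Kp s) F) /\
     (exists F, analytic_continuation Km Kp (Rcoef Km Kp s) F) /\
     (exists F, analytic_continuation Km Kp (Tcoef Km Kp s) F) /\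
     (exists G : C -> R -> C,
        (forall X : R,
           analytic_continuation Km Kp (fun lam => Psi Km Kp s lam X)
             (fun z => G z X)) /\
        (forall S : C * R -> Prop, compact_CR S ->
           (forall p, S p -> Dslit Km Kp (fst p)) ->
           exists M : R, forall p, S p -> Cmod (G (fst p) (snd p)) <= M))).
Proof.
  split; [exact (Cmod_Psi_le_2 Km Kp) |]. intros s.
  split; [eexists; apply analytic_continuation_beta |].
  split; [eexists; apply analytic_continuation_Rcoef |].
  split; [eexists; apply analytic_continuation_Tcoef |].
  exists (fun z X => wave (fun t => betaC Km Kp t z) s X).
  split; [exact (analytic_continuation_Psi Km Kp s) |].
  intros S HS HD.
  apply (bounded_on_compact_CR S
           (fun p => Cmod (wave (fun t => betaC Km Kp t (fst p)) s (snd p)))); auto.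
  intros p Hp. apply wave_betaC_locally_bounded, HD, Hp.
Qed.
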